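(* Let $S$ be a nonnegative relation in $\mathfrak H$ with $\mathcal W(S)=\{0\}$, and let $H$ be a selfadjoint extension of $S$. Then $\mathcal W(H)=\{0\}$ if and only if $H$ is a nonnegative extremal extension of $S$ (extremal with respect to $0$).
   Context: Linear relations in $\mathfrak H$ are linear subspaces of $\mathfrak H\times\mathfrak H$; $T^*$ adjoint; selfadjoint means $T=T^*$. Numerical range $\mathcal W(T)=\{(\varphi',\varphi):\{\varphi,\varphi'\}\in T,\|\varphi\|=1\}$ (and $\{0\}$ if $\mathrm{dom}\,T=\{0\}$). $S$ nonnegative means $(\varphi',\varphi)\ge0$ for all $\{\varphi,\varphi'\}\in S$. A selfadjoint extension $H$ of $S$ is extremal with respect to $0$ if for every $\{f,f'\}\in H$, $\inf\{(f'-h',f-h):\{h,h'\}\in S\}=0$. *)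

From mathcomp Require Import all_boot all_order all_algebra.
From mathcomp Require Import complex.
From mathcomp Require Import reals.
Set Implicit Arguments. Unset Strict Implicit. Unset Printing Implicit Defensive.
Import Order.TTheory GRing.Theory Num.Theory.
Local Open Scope ring_scope.
Local Open Scope complex_scope.

Section Hilbert.
Variables (R : realType) (V : lmodType R[i]).

Definition hnorm (ip : V -> V -> R[i]) (x : V) : R := Num.sqrt (complex.Re (ip x x)).

Definition is_hilbert (ip : V -> V -> R[i]) : Prop :=
  [/\ (forall (a : R[i]) (x y z : V), ip (a *: x + y) z = a * ip x z + ip y z),
      (forall x y : V, ip y x = (ip x y)^*),
      (forall x : V, 0 <= ip x x),
      (forall x : V, ip x x = 0 -> x = 0)
    & (forall u : nat -> V,
        (forall e : R, 0 < e -> exists N : nat, forall m n : nat,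
            (N <= m)%N -> (N <= n)%N -> hnorm ip (u m - u n) < e) ->
        exists l : V, forall e : R, 0 < e -> exists N : nat, forall n : nat,
            (N <= n)%N -> hnorm ip (u n - l) < e)].

Definition linrel (T : V * V -> Prop) : Prop :=
  [/\ T (0, 0),
      (forall p q, T p -> T q -> T (p.1 + q.1, p.2 + q.2))
    & (forall (a : R[i]) p, T p -> T (a *: p.1, a *: p.2))].

Definition adjoint (ip : V -> V -> R[i]) (T : V * V -> Prop) : V * V -> Prop :=
  fun q => forall p, T p -> ip p.2 q.1 = ip p.1 q.2.

Definition selfadjoint (ip : V -> V -> R[i]) (T : V * V -> Prop) : Prop :=
  forall p, T p <-> adjoint ip T p.

Definition extension (S H : V * V -> Prop) : Prop := forall p, S p -> H p.

Definition numrange (ip : V -> V -> R[i]) (T : V * V -> Prop) : R[i] -> Prop :=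
  fun c => (exists p, T p /\ hnorm ip p.1 = 1 /\ c = ip p.2 p.1)
           \/ ((forall p, T p -> p.1 = 0) /\ c = 0).

Definition nonnegative (ip : V -> V -> R[i]) (T : V * V -> Prop) : Prop :=
  forall p, T p -> 0 <= ip p.2 p.1.

(* H is extremal w.r.t. 0: for every (f,f') in H,
   inf {(f'-h', f-h) : (h,h') in S} = 0, i.e. 0 is the greatest lower bound
   (in the order of C, where a <= b means b - a is real nonnegative). *)
Definition extremal (ip : V -> V -> R[i]) (S H : V * V -> Prop) : Prop :=
  forall p, H p ->
    (forall q, S q -> 0 <= ip (p.2 - q.2) (p.1 - q.1)) /\
    (forall e : R, 0 < e -> exists q, S q /\ ip (p.2 - q.2) (p.1 - q.1) < e%:C).

End Hilbert.

From mathcomp Require Import all_boot all_order all_algebra.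
From mathcomp Require Import complex reals ring.
From Stdlib Require Import Classical.
Import Order.TTheory GRing.Theory Num.Theory.
Set Implicit Arguments. Unset Strict Implicit. Unset Printing Implicit Defensive.
Local Open Scope ring_scope.
Local Open Scope complex_scope.

(* If (f, f') is in H and (h, h') in S, selfadjointness and (h', h) = 0 give
   (f' - h', f - h) = (f', f) - 2 Re (f, h').  Since S is closed under real
   scaling, nonnegativity of this expression for all of S forces Re (f, h') = 0,
   so the infimum over S is the constant (f', f), which extremality makes 0.
   Conversely, if the form vanishes on H it vanishes on the differences
   (f - h, f' - h') as well, and h = 0 attains the infimum. *)

Lemma lin_ge0_eq0 (R : realFieldType) (a r : R) :
  (forall t, 0 <= a - t * r) -> r = 0.
Proof.
move=> ge0; apply/eqP; apply: contraT => r_neq0.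
have := ge0 ((a + 1) / r).
by rewrite divfK // opprD addrA subrr sub0r oppr_ge0 ler10.
Qed.

Lemma Re_mul_real (R : realType) (t : R) (z : R[i]) :
  complex.Re (t%:C * z) = t * complex.Re z.
Proof. by case: z => u v /=; rewrite mul0r subr0. Qed.

Section InnerProduct.
Variables (R : realType) (V : lmodType R[i]) (ip : V -> V -> R[i]).
Hypothesis ip_hilbert : is_hilbert ip.

Lemma ip_conj x y : ip y x = (ip x y)^*.
Proof. by case: ip_hilbert. Qed.

Lemma ipDl x y z : ip (x + y) z = ip x z + ip y z.
Proof.
by case: ip_hilbert => lin _ _ _ _; rewrite -[x]scale1r lin mul1r scale1r.
Qed.

Lemma ipZl a x z : ip (a *: x) z = a * ip x z.
Proof.
have ip0l : ip 0 z = 0 by apply: (addrI (ip 0 z)); rewrite -ipDl !addr0.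
by case: ip_hilbert => lin _ _ _ _; rewrite -[a *: x]addr0 lin ip0l addr0.
Qed.

Lemma ipBl x y z : ip (x - y) z = ip x z - ip y z.
Proof. by rewrite ipDl -scaleN1r ipZl mulN1r. Qed.

Lemma ipBr x y z : ip z (x - y) = ip z x - ip z y.
Proof. by rewrite ip_conj ipBl rmorphB /= -!ip_conj. Qed.

Lemma ipZr a x z : ip z (a *: x) = a^* * ip z x.
Proof. by rewrite ip_conj ipZl rmorphM /= -ip_conj. Qed.

Lemma ipZr_real (t : R) x z : ip z (t%:C *: x) = t%:C * ip z x.
Proof. by rewrite ipZr; congr (_ * _); exact: conjc_real. Qed.

Lemma unit_rescale x : x != 0 -> exists2 k : R[i], k != 0 & hnorm ip (k *: x) = 1.
Proof.
move=> x_neq0; case: ip_hilbert => _ _ ge0 def0 _.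
set a := complex.Re (ip x x).
have ipxx : ip x x = a%:C by rewrite /a RRe_real ?ger0_real.
have a_gt0 : 0 < a.
  rewrite lt_def -ler0c -ipxx ge0 andbT; apply: contra x_neq0 => /eqP a0.
  by apply/eqP/def0; rewrite ipxx a0.
have n_gt0 : 0 < Num.sqrt a by rewrite sqrtr_gt0.
exists (Num.sqrt a)^-1%:C.
  by rewrite eq_complex /= invr_eq0 gt_eqF.
rewrite /hnorm ipZl ipZr_real ipxx -!rmorphM /=.
suff -> : (Num.sqrt a)^-1 * ((Num.sqrt a)^-1 * a) = 1 by rewrite sqrtr1.
by rewrite -{3}(sqr_sqrtr (ltW a_gt0)); field; rewrite gt_eqF.
Qed.

Lemma numrange_eq0P (T : V * V -> Prop) : linrel T ->
  (forall c, numrange ip T c <-> c = 0) <-> (forall p, T p -> ip p.2 p.1 = 0).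
Proof.
case=> _ _ TZ; split=> [W0 [f f'] Tp /= | form0 c].
  have [->|f_neq0] := eqVneq f 0.
    by rewrite -(subrr (0 : V)) ipBr subrr.
  have [k k_neq0 k1] := unit_rescale f_neq0.
  have /W0 : numrange ip T (ip (k *: f') (k *: f)).
    by left; exists (k *: f, k *: f'); split; [exact: (TZ k _ Tp) | split].
  by rewrite ipZl ipZr => /eqP; rewrite !mulf_eq0 conjc_eq0 (negbTE k_neq0) => /eqP.
split=> [[[p [Tp [_ ->]]]|[_ ->]] //|->]; first exact: form0.
have [[[f f'] [Tp /= /eqP f_neq0]]|dom0] := classic (exists p, T p /\ p.1 <> 0).
  have [k _ k1] := unit_rescale f_neq0.
  left; exists (k *: f, k *: f'); rewrite (form0 _ (TZ k _ Tp)).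
  by split; first exact: (TZ k _ Tp).
by right; split=> // p Tp; apply: NNPP => p1_neq0; apply: dom0; exists p.
Qed.

Section Extensions.
Variables (S H : V * V -> Prop).
Hypotheses (S_linrel : linrel S) (H_linrel : linrel H) (S_sub_H : extension S H).

Lemma form0_nonneg_extremal : (forall p, H p -> ip p.2 p.1 = 0) ->
  nonnegative ip H /\ extremal ip S H.
Proof.
move=> form0; case: H_linrel => _ HD HZ.
split=> [p /form0 -> // | p Hp]; split=> [q Sq | e e_gt0].
  have := HD p _ Hp (HZ (-1) q (S_sub_H Sq)).
  by rewrite /= !scaleN1r => /form0 ->.
exists (0, 0); split; first by case: S_linrel.
by rewrite /= !subr0 form0 // ltcE /= eqxx e_gt0.
Qed.

Hypothesis H_selfadjoint : selfadjoint ip H.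
Hypothesis S_form0 : forall q, S q -> ip q.2 q.1 = 0.

Lemma ip_sub_extension p q : H p -> S q ->
  ip (p.2 - q.2) (p.1 - q.1) = ip p.2 p.1 - (complex.Re (ip p.1 q.2) *+ 2)%:C.
Proof.
case: p q => [f f'] [h h'] Hp Sq /=.
have sym : ip f' h = ip f h' := (H_selfadjoint (h, h')).1 (S_sub_H Sq) (f, f') Hp.
rewrite ipBl !ipBr (S_form0 Sq) subr0 sym (ip_conj f h') -addrA -opprD addcJ.
by rewrite rmorphMn mulr_natl.
Qed.

Lemma extension_Re_ip_eq0 p : H p ->
  (forall q, S q -> 0 <= ip (p.2 - q.2) (p.1 - q.1)) ->
  forall q, S q -> complex.Re (ip p.1 q.2) = 0.
Proof.
move=> Hp ge0 q Sq; case: S_linrel => S0 _ SZ.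
have /RRe_real Ea : ip p.2 p.1 \is Num.real.
  by apply: ger0_real; have := ge0 _ S0; rewrite /= !subr0.
suff /eqP : complex.Re (ip p.1 q.2) *+ 2 = 0 by rewrite mulrn_eq0 => /eqP.
apply: (@lin_ge0_eq0 _ (complex.Re (ip p.2 p.1))) => t.
have := ge0 _ (SZ t%:C q Sq).
rewrite (ip_sub_extension Hp (SZ t%:C q Sq)) /= ipZr_real Re_mul_real.
by rewrite -Ea -mulrnAr -rmorphB ler0c.
Qed.

Lemma extremal_form0 : extremal ip S H -> forall p, H p -> ip p.2 p.1 = 0.
Proof.
move=> ext p Hp; have [ge0 inf] := ext p Hp.
have Re0 := extension_Re_ip_eq0 Hp ge0.
have const q : S q -> ip (p.2 - q.2) (p.1 - q.1) = ip p.2 p.1.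
  by move=> Sq; rewrite ip_sub_extension // Re0 // mul0rn subr0.
case: S_linrel => S0 _ _.
have a_ge0 := ge0 _ S0; rewrite const // in a_ge0.
have /RRe_real <- := ger0_real a_ge0; congr _%:C.
apply/eqP; rewrite eq_le -ler0c RRe_real ?ger0_real // a_ge0 andbT.
rewrite leNgt; apply/negP => a_gt0.
have [q [Sq]] := inf _ a_gt0.
by rewrite const // RRe_real ?ger0_real // ltxx.
Qed.

End Extensions.
End InnerProduct.

Theorem proposition8p3 (R : realType) (V : lmodType R[i]) (ip : V -> V -> R[i])
    (S H : V * V -> Prop) :
  is_hilbert ip -> linrel S -> nonnegative ip S ->
  (forall c, numrange ip S c <-> c = 0) ->
  linrel H -> selfadjoint ip H -> extension S H ->
  ((forall c, numrange ip H c <-> c = 0) <->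
   (nonnegative ip H /\ extremal ip S H)).
Proof.
move=> hilb S_linrel _ WS H_linrel H_sa S_sub_H.
have S_form0 := (numrange_eq0P hilb S_linrel).1 WS.
rewrite (numrange_eq0P hilb H_linrel); split.
  exact: form0_nonneg_extremal.
by case=> _; exact: extremal_form0.
Qed.
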